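(* Let $\mathscr Q_n$ be a non-singular quadric in $\mathrm{PG}(n,2)$ of projective index $g\ge1$, let $0\le s<g$, let $\alpha_s$ be an $s$-dimensional subspace contained in $\mathscr Q_n$, and let $\Gamma_s$ be the graph constructed from $\alpha_s$ as described below. If $\mathcal C$ is a clique of $\Gamma_s$ with $2^{g+1}-1$ vertices containing no vertex of type (iii), then $\mathcal C$ is the point set of a generator of $\mathscr Q_n$ containing $\alpha_s$.
   Context: A non-singular quadric $\mathscr Q_n$ in $\mathrm{PG}(n,2)$ is the point set of a non-degenerate quadric; its projective index $g$ is the largest dimension of a projective subspace contained in $\mathscr Q_n$, and the $g$-dimensional subspaces contained in $\mathscr Q_n$ are its generators. The point-graph $\Gamma$ has vertex set the points of $\mathscr Q_n$, two distinct points adjacent iff the line joining them is contained in $\mathscr Q_n$. A point $X$ of $\mathscr Q_n$ has type (i) if $X\in\alpha_s$; type (ii) if $X\notin\alpha_s$ and $\langle\alpha_s,X\rangle\subseteq\mathscr Q_n$; type (iii) otherwise. Let $\mathcal X_s$ be the type (ii) points and $\mathcal Y_s$ the points of type (i) or (iii). The graph $\Gamma_s$ has the same vertex set as $\Gamma$ and the same edges, except that for each vertex $R\in\mathcal Y_s$ having exactly $\frac12|\mathcal X_s|$ neighbours in $\mathcal X_s$ (in $\Gamma$), those edges are deleted and $R$ is joined instead to the other $\frac12|\mathcal X_s|$ vertices of $\mathcal X_s$. *)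

(* PG(n,2) = nonzero row vectors of 'rV['F_2]_(n.+1). *)
From mathcomp Require Import all_boot all_order all_algebra.
Set Implicit Arguments. Unset Strict Implicit. Unset Printing Implicit Defensive.
Import GRing.Theory.
Local Open Scope ring_scope.

Section Quadric.
Variable n : nat.
Notation vec := 'rV['F_2]_(n.+1).

(* quadratic form Q(x) = x A x^T (every quadratic form over F_2 arises so) *)
Definition qf (A : 'M['F_2]_(n.+1)) (x : vec) : 'F_2 := (x *m A *m x^T) 0 0.

Definition polar A (x y : vec) : 'F_2 := qf A (x + y) - qf A x - qf A y.

Definition nonsingular A : Prop :=
  forall v : vec, v != 0 -> qf A v = 0 -> exists w : vec, polar A v w != 0.

Definition on_quadric A (x : vec) : bool := (x != 0) && (qf A x == 0).

Definition tsing A m (U : 'M['F_2]_(m, n.+1)) : bool :=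
  [forall v : vec, (v <= U)%MS ==> (qf A v == 0)].

(* projective index g: largest projective dimension of a subspace in Q *)
Definition proj_index A (g : nat) : Prop :=
  (exists U : 'M['F_2]_(n.+1), \rank U = g.+1 /\ tsing A U) /\
  (forall U : 'M['F_2]_(n.+1), tsing A U -> (\rank U <= g.+1)%N).

Definition pts m (U : 'M['F_2]_(m, n.+1)) : {set vec} :=
  [set v : vec | (v != 0) && (v <= U)%MS].

(* adjacency in the point graph Gamma: line x, y, x+y contained in Q *)
Definition adj A (x y : vec) : bool :=
  [&& on_quadric A x, on_quadric A y, x != y & qf A (x + y) == 0].

(* types relative to alpha_s (spanned by S) *)
Definition type_i (S : 'M['F_2]_(n.+1)) (X : vec) : bool := (X <= S)%MS.
Definition type_ii A (S : 'M['F_2]_(n.+1)) (X : vec) : bool :=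
  [&& on_quadric A X, ~~ (X <= S)%MS & tsing A (S + X)%MS].
Definition type_iii A S X : bool :=
  [&& on_quadric A X, ~~ type_i S X & ~~ type_ii A S X].

Definition Xs A S : {set vec} := [set X | type_ii A S X].
Definition Ys A S : {set vec} := [set X | on_quadric A X && ~~ type_ii A S X].

Definition special A S (R : vec) : bool :=
  (R \in Ys A S) && ((#|[set X in Xs A S | adj A R X]|).*2 == #|Xs A S|)%N.

Definition flip A S (x y : vec) : bool :=
  (special A S x && (y \in Xs A S)) || (special A S y && (x \in Xs A S)).

Definition adj_s A S (x y : vec) : bool :=
  [&& on_quadric A x, on_quadric A y, x != y & adj A x y (+) flip A S x y].

Definition clique_s A S (C : {set vec}) : Prop :=
  (forall x, x \in C -> on_quadric A x) /\
  (forall x y, x \in C -> y \in C -> x != y -> adj_s A S x y).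

End Quadric.

(* Points of the clique that are not of type (iii) lie in a subspace <alpha_s, X> of the
   quadric.  A point of alpha_s is joined in Gamma to every type (ii) point, so it can
   have exactly half of them as neighbours only when there are none; hence no edge of the
   clique is switched and the clique is a clique of Gamma.  Its points are then pairwise
   orthogonal for the polar form, so they span a totally singular subspace, of rank at
   most g + 1 and therefore with at most 2^(g+1) - 1 points: the clique is all of it and
   it is a generator.  Finally alpha_s is orthogonal to every point of the clique, so
   alpha_s + generator is still totally singular, and maximality puts alpha_s inside. *)
From mathcomp Require Import all_boot all_order all_algebra.
From mathcomp Require Import ring zify.
Set Implicit Arguments. Unset Strict Implicit. Unset Printing Implicit Defensive.
Import GRing.Theory.
Local Open Scope ring_scope.

Lemma addrr_F2 m p (x : 'M['F_2]_(m, p)) : x + x = 0.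
Proof. by apply/matrixP => i j; rewrite !mxE addrr_pchar2 // pchar_Fp. Qed.

Section QuadraticForm.
Variables (n : nat) (A : 'M['F_2]_(n.+1)).
Notation vec := 'rV['F_2]_(n.+1).

Lemma qf0 : qf A 0 = 0.
Proof. by rewrite /qf !mul0mx mxE. Qed.

Lemma qfD (x y : vec) : qf A (x + y) = qf A x + qf A y + polar A x y.
Proof. rewrite /polar; ring. Qed.

Lemma qfZ c (x : vec) : qf A (c *: x) = c * c * qf A x.
Proof. by rewrite /qf -!scalemxAl linearZ /= -scalemxAr !mxE mulrA. Qed.

Lemma polarC (x y : vec) : polar A x y = polar A y x.
Proof. by rewrite /polar [y + x]addrC; ring. Qed.

Lemma polarxx (x : vec) : polar A x x = 0.
Proof. by rewrite /polar addrr_F2 qf0 sub0r -opprD addrr_pchar2 ?oppr0 // pchar_Fp. Qed.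

Lemma polar_mx (x y : vec) : polar A x y = (x *m (A + A^T) *m y^T) 0 0.
Proof.
have qf_tr (u v : vec) : (v *m A *m u^T) 0 0 = (u *m A^T *m v^T) 0 0.
  have -> : (v *m A *m u^T) 0 0 = ((v *m A *m u^T)^T) 0 0 by rewrite [RHS]mxE.
  by rewrite !trmx_mul !trmxK mulmxA.
have entryD (M N : 'M['F_2]_1) : (M + N) 0 0 = M 0 0 + N 0 0 by rewrite mxE.
rewrite /polar /qf linearD /= !(mulmxDl, mulmxDr) !entryD (qf_tr x y); ring.
Qed.

Lemma polar_submx m (M : 'M_(m, n.+1)) (v w : vec) :
  (forall i, polar A (row i M) w = 0) -> (v <= M)%MS -> polar A v w = 0.
Proof.
move=> rowM0 /submxP [a ->].
have MBw0 : M *m ((A + A^T) *m w^T) = 0.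
  apply/matrixP => i j; rewrite ord1 [RHS]mxE -(rowM0 i) polar_mx -mulmxA -row_mul.
  by rewrite [RHS]mxE.
by rewrite polar_mx -!mulmxA MBw0 mulmx0 mxE.
Qed.

Lemma adj_polar (x y : vec) : adj A x y -> polar A x y = 0.
Proof.
case/and4P=> /andP [_ /eqP qx] /andP [_ /eqP qy] _ /eqP qxy.
by rewrite /polar qxy qx qy !subr0.
Qed.

Lemma tsingP m (M : 'M_(m, n.+1)) v : tsing A M -> (v <= M)%MS -> qf A v = 0.
Proof. by move=> /forallP /(_ v) /implyP H /H /eqP. Qed.

Lemma eq_tsing m1 m2 (M1 : 'M_(m1, n.+1)) (M2 : 'M_(m2, n.+1)) :
  (M1 :=: M2)%MS -> tsing A M1 = tsing A M2.
Proof. by move=> eqM; apply: eq_forallb => v; rewrite eqM. Qed.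

Lemma tsing_polar m (M : 'M_(m, n.+1)) v w :
  tsing A M -> (v <= M)%MS -> (w <= M)%MS -> polar A v w = 0.
Proof.
by move=> TM vM wM; rewrite /polar !(tsingP TM) ?addmx_sub // !subr0.
Qed.

Lemma tsing_addsmx m1 m2 (M1 : 'M_(m1, n.+1)) (M2 : 'M_(m2, n.+1)) :
  tsing A M1 -> tsing A M2 ->
  (forall v w, (v <= M1)%MS -> (w <= M2)%MS -> polar A v w = 0) ->
  tsing A (M1 + M2)%MS.
Proof.
move=> T1 T2 orth; apply/forallP => v; apply/implyP => /sub_addsmxP [[a b] ->] /=.
by rewrite qfD (tsingP T1) ?(tsingP T2) ?orth ?submxMl // !addr0.
Qed.

Lemma tsing_rows m (M : 'M_(m, n.+1)) :
  (forall i, qf A (row i M) = 0) ->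
  (forall i j, polar A (row i M) (row j M) = 0) -> tsing A M.
Proof.
move=> qM polM.
have orth v w : (v <= M)%MS -> (w <= M)%MS -> polar A v w = 0.
  move=> vM wM; apply: polar_submx vM => i; rewrite polarC.
  by apply: polar_submx wM => j; rewrite polarC.
apply/forallP => v; apply/implyP => /submxP [a ->]; rewrite mulmx_sum_row.
set w := (\sum_i _)%R.
suff /andP[] : (w <= M)%MS && (qf A w == 0) by [].
apply: (big_ind (fun v => (v <= M)%MS && (qf A v == 0))).
- by rewrite sub0mx qf0.
- move=> x y /andP [xM /eqP qx] /andP [yM /eqP qy].
  by rewrite addmx_sub // qfD qx qy orth // !addr0.
- by move=> i _; rewrite scalemx_sub ?row_sub // qfZ qM mulr0.
Qed.

Lemma rank_tsing_le g m (M : 'M_(m, n.+1)) :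
  proj_index A g -> tsing A M -> (\rank M <= g.+1)%N.
Proof.
move=> [_ maxg] TM; rewrite -genmxE; apply: maxg.
by rewrite (eq_tsing (genmxE M)).
Qed.

Lemma submx_generator g m1 m2 (M : 'M_(m1, n.+1)) (U : 'M_(m2, n.+1)) :
  proj_index A g -> \rank U = g.+1 -> tsing A (M + U)%MS -> (M <= U)%MS.
Proof.
move=> PI rU TMU; apply: submx_trans (addsmxSl M U) _.
case: (mxrank_leqif_sup (addsmxSr M U)) => _ <-.
by rewrite eqn_leq rU rank_tsing_le // -rU mxrankS ?addsmxSr.
Qed.

End QuadraticForm.

Section Points.
Variable n : nat.
Notation vec := 'rV['F_2]_(n.+1).

Lemma card_pts_lt m (M : 'M['F_2]_(m, n.+1)) : (#|pts M| < 2 ^ \rank M)%N.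
Proof.
have -> : (#|pts M|.+1 = #|(0%R : vec) |: pts M|)%N by rewrite cardsU1 !inE eqxx.
have sub_im : (0%R : vec) |: pts M \subset [set w *m row_base M | w : 'rV_(\rank M)].
  apply/subsetP => v; rewrite !inE => /orP [/eqP -> | /andP [_]].
    by apply/imsetP; exists 0; rewrite ?inE // mul0mx.
  rewrite -(eq_row_base M) => /submxP [w ->].
  by apply/imsetP; exists w; rewrite ?inE.
apply: leq_trans (subset_leq_card sub_im) _; apply: leq_trans (leq_imset_card _ _) _.
by rewrite card_mx card_Fp // mul1n.
Qed.

Lemma pts_full_card (C : {set vec}) r m (M : 'M['F_2]_(m, n.+1)) :
  C \subset pts M -> (\rank M <= r)%N -> #|C| = (2 ^ r - 1)%N ->
  C = pts M /\ \rank M = r.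
Proof.
move=> CM rM cardC.
have le2 : (2 ^ \rank M <= 2 ^ r)%N by rewrite leq_exp2l.
have ltM := card_pts_lt M; have leC := subset_leq_card CM.
have r_gt0 : (0 < 2 ^ r)%N by rewrite expn_gt0.
have ek : (2 ^ \rank M = 2 ^ r)%N.
  by move: (2 ^ \rank M)%N (2 ^ r)%N le2 ltM cardC r_gt0 => k l; lia.
split; last by apply/eqP; rewrite -(eqn_exp2l _ _ (isT : 1 < 2)%N) ek.
by apply/eqP; rewrite eqEcard CM cardC -ek; move: (2 ^ \rank M)%N ltM => k; lia.
Qed.

Definition span_set (C : {set vec}) : 'M['F_2]_(#|C|, n.+1) :=
  \matrix_(i < #|C|) enum_val i.

Lemma row_span_set (C : {set vec}) i : row i (span_set C) \in C.
Proof. by rewrite rowK enum_valP. Qed.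

Lemma sub_span_set (C : {set vec}) x : x \in C -> (x <= span_set C)%MS.
Proof. by move=> xC; rewrite -(enum_rankK_in xC xC) -rowK row_sub. Qed.

End Points.

Section SwitchedGraph.
Variables (n : nat) (A S : 'M['F_2]_(n.+1)).
Notation vec := 'rV['F_2]_(n.+1).

Lemma tsing_not_type_iii (X : vec) :
  tsing A S -> on_quadric A X -> ~~ type_iii A S X -> tsing A (S + X)%MS.
Proof.
move=> TS qX; have [XS _ | XS] := boolP (X <= S)%MS.
  by rewrite (eq_tsing _ (addsmx_idPl XS)).
by rewrite /type_iii qX /type_i XS negbK => /and3P[].
Qed.

Lemma type_ii_adj (x X : vec) :
  on_quadric A x -> (x <= S)%MS -> type_ii A S X -> adj A x X.
Proof.
move=> qx xS /and3P [qX XS TSX]; rewrite /adj qx qX /=.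
apply/andP; split; first by apply: contraNneq XS => <-.
by rewrite (tsingP TSX) // addmx_sub ?addsmxSr // (submx_trans xS (addsmxSl S X)).
Qed.

Lemma special_Xs0 (x : vec) :
  on_quadric A x -> tsing A (S + x)%MS -> special A S x -> Xs A S = set0.
Proof.
move=> qx TSx /andP []; rewrite inE qx /= => not_ii /eqP half.
have xS : (x <= S)%MS by apply: contraNT not_ii => xS; rewrite /type_ii qx xS.
have adjXs : [set X in Xs A S | adj A x X] = Xs A S.
  apply/setP => X; rewrite !inE; case XS: (type_ii A S X) => //=.
  exact: type_ii_adj.
by apply: cards0_eq; move: half; rewrite adjXs -addnn -[in RHS](add0n #|_|) => /addIn.
Qed.

Lemma adj_sE (x y : vec) :
  on_quadric A x -> tsing A (S + x)%MS -> on_quadric A y -> tsing A (S + y)%MS ->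
  adj_s A S x y = adj A x y.
Proof.
move=> qx TSx qy TSy.
have unflipped u v : on_quadric A u -> tsing A (S + u)%MS ->
    special A S u && (v \in Xs A S) = false.
  by move=> qu TSu; apply/negbTE/andP => [[/(special_Xs0 qu TSu) ->]]; rewrite inE.
by rewrite /adj_s /flip !unflipped // addbF /adj qx qy /=; case: (x != y).
Qed.

End SwitchedGraph.

Theorem lemma5p2 (n : nat) (A : 'M['F_2]_(n.+1)) (g s : nat)
    (S : 'M['F_2]_(n.+1)) (C : {set 'rV['F_2]_(n.+1)}) :
  nonsingular A -> proj_index A g -> (1 <= g)%N -> (s < g)%N ->
  \rank S = s.+1 -> tsing A S ->
  clique_s A S C -> #|C| = (2 ^ g.+1 - 1)%N ->
  (forall X, X \in C -> ~ type_iii A S X) ->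
  exists U : 'M['F_2]_(n.+1),
    [/\ \rank U = g.+1, tsing A U, (S <= U)%MS & C = pts U].
Proof.
move=> _ PI _ _ _ TS [onC cliqueC] cardC not_iii.
have qC x : x \in C -> qf A x = 0 by move=> /onC /andP [_ /eqP].
have TSC x : x \in C -> tsing A (S + x)%MS.
  by move=> xC; apply: tsing_not_type_iii TS (onC x xC) _; apply/negP; exact: not_iii.
have polarC0 x y : x \in C -> y \in C -> polar A x y = 0.
  move=> xC yC; have [<- | xy] := eqVneq x y; first exact: polarxx.
  by apply: adj_polar; rewrite -(adj_sE (onC x xC) (TSC x xC) (onC y yC)) ?TSC ?cliqueC.
set U := span_set C.
have TU : tsing A U.
  by apply: tsing_rows => [i | i j]; rewrite ?qC ?polarC0 ?row_span_set.
have CU : C \subset pts U.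
  by apply/subsetP => x xC; rewrite inE sub_span_set // andbT; case/andP: (onC x xC).
have [CptsU rU] := pts_full_card CU (rank_tsing_le PI TU) cardC.
have SU : (S <= U)%MS.
  apply: submx_generator PI rU (tsing_addsmx TS TU _) => v w vS wU.
  rewrite polarC; apply: polar_submx wU => i; rewrite polarC.
  have /TSC TSx := row_span_set i.
  by rewrite (tsing_polar TSx) ?addsmxSr // (submx_trans vS (addsmxSl _ _)).
exists <<U>>%MS; split; rewrite ?genmxE ?(eq_tsing _ (genmxE U)) //.
by apply: etrans CptsU _; apply/setP => v; rewrite !inE genmxE.
Qed.
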